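(* For every $n\geq 1$, the Fibonacci-sum set-graph $G^F_{A^{(n)}}$ is Eulerian.
   Context: Let $\mathcal{F}=\{f_m\}_{m\ge 0}$ be the Fibonacci numbers, $f_0=0$, $f_1=1$, $f_m=f_{m-1}+f_{m-2}$. The Fibonacci-sum set-graph $G^F_{A^{(n)}}$ is the multigraph (loops and multiple edges allowed) whose vertices are in bijection with the nonempty subsets of $A^{(n)}=\{1,\dots,n\}$; between the vertices corresponding to distinct subsets $S,T$ there is one edge for each pair $(i',j')$ with $i'\in S$, $j'\in T$, $i'\neq j'$ and $i'+j'\in\mathcal{F}$, and at the vertex corresponding to $S$ there is one loop for each pair of distinct elements $i',j'\in S$ with $i'+j'\in\mathcal{F}$. *)

From mathcomp Require Import all_boot.
Set Implicit Arguments. Unset Strict Implicit. Unset Printing Implicit Defensive.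

Fixpoint fib (m : nat) : nat :=
  match m with
  | 0 => 0
  | 1 => 1
  | (k.+1 as k1).+1 => fib k1 + fib k
  end.

Definition in_fib (m : nat) : Prop := exists k, fib k = m.

(* Vertices of G^F_{A^(n)}: nonempty subsets of A^(n) = {1,...,n}.
   We encode A^(n) by the ordinal type 'I_n, the ordinal i standing for the
   number i.+1; so a vertex is a nonempty S : {set 'I_n}.

   Edges are described via "darts" (half-edges with an orientation):
   a dart is a quadruple (S, T, i, j) with S, T nonempty, i \in S, j \in T,
   i <> j and (i.+1) + (j.+1) \in F.  S = T is allowed (loops).
   The reversal (T, S, j, i) of a dart is again a dart and is different from
   it (since i <> j).  Each edge of the multigraph corresponds to exactly one
   unordered pair {d, rev d} of darts:
   - for S <> T, the edges between S and T (one per pair (i',j') in S x T,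
     i' <> j', i'+j' in F) are the pairs {(S,T,i,j),(T,S,j,i)};
   - for the loops at S (one per pair of distinct elements i', j' of S with
     i'+j' in F) they are the pairs {(S,S,i,j),(S,S,j,i)}. *)
Definition dart (n : nat) := ({set 'I_n} * {set 'I_n} * 'I_n * 'I_n)%type.

Definition dtail n (d : dart n) : {set 'I_n} := d.1.1.1.
Definition dhead n (d : dart n) : {set 'I_n} := d.1.1.2.
Definition drev n (d : dart n) : dart n := (d.1.1.2, d.1.1.1, d.2, d.1.2).

Definition is_dart n (d : dart n) : Prop :=
  let: (A, B, i, j) := d in
  [/\ A != set0, B != set0, i \in A, j \in B &
      (i != j /\ in_fib (i.+1 + j.+1))].

(* An Eulerian circuit of G^F_{A^(n)}: a closed walk, given as a cyclic
   sequence of darts (the head of each dart is the tail of the next one,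
   cyclically), traversing every edge exactly once, i.e. for every dart d
   the darts d and rev d together occur exactly once in the sequence. *)
Definition euler_circuit n (s : seq (dart n)) : Prop :=
  [/\ forall d, d \in s -> is_dart d,
      cycle (fun d e => dhead d == dtail e) s &
      forall d, is_dart d -> count_mem d s + count_mem (drev d) s = 1].

Definition fib_set_graph_eulerian (n : nat) : Prop :=
  exists s : seq (dart n), euler_circuit s.

(* Euler's theorem, for a multigraph given by its darts: when every vertex has
   even degree and the edges are connected, a trail that cannot be extended is
   a closed trail through every edge.  An open trail leaves an odd number of
   used darts at its end vertex, so some unused dart starts there; a closed
   trail missing an edge can be rotated to start at a vertex carrying an unused
   dart.  In G^F the darts (S, T, i, j) leaving S are paired off by toggling i
   in T (j stays in T as i <> j), so degrees are even; and any two edges are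
   linked through the vertex {1, ..., n}, adjacent to every non-isolated
   vertex. *)

From mathcomp Require Import all_boot zify.
Set Implicit Arguments. Unset Strict Implicit. Unset Printing Implicit Defensive.

Lemma even_card_involution (T : finType) (f : T -> T) (A : {set T}) :
  involutive f -> {in A, forall x, f x \in A /\ f x != x} -> ~~ odd #|A|.
Proof.
move=> fK; elim: {A}_.+1 {-2}A (ltnSn #|A|) => // m IH A ltAm fA.
have [->|[x xA]] := set_0Vmem A; first by rewrite cards0.
have [fxA fxx] := fA x xA.
pose B := A :\: [set x; f x].
have cardA : #|A| = #|B| + 2.
  have /setIidPr sAx : [set x; f x] \subset A.
    by apply/subsetP => y /set2P[] ->.
  by rewrite -(cardsID [set x; f x] A) sAx cards2 eq_sym fxx addnC.
have fB : {in B, forall y, f y \in B /\ f y != y}.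
  move=> y; rewrite !inE negb_or => /andP[/andP[yx yfx] yA].
  have [fyA fyy] := fA y yA.
  split=> //; rewrite fyA andbT.
  by rewrite -{1}(fK x) !(inj_eq (can_inj fK)) negb_or yfx yx.
rewrite cardA oddD addbF; apply: IH fB; lia.
Qed.

Section EulerCircuit.

Variables (D : finType) (V : eqType) (source : D -> V) (rev : D -> D).
Hypothesis revK : involutive rev.
Variable E : pred D.
Hypothesis E_rev : {homo rev : d / E d}.
Hypothesis rev_neq : {in E, forall d, rev d != d}.
Hypothesis even_degree : forall v, ~~ odd #|[set d | E d & source d == v]|.

Definition target d := source (rev d).
Definition adj : rel D := fun d e => target d == source e.
Definition adjE : rel D := fun d e => adj d e && E e.

Hypothesis connected : {in E &, forall d e, connect adjE d e}.

Definition used (s : seq D) := s ++ map rev s.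
Definition trail s := [&& all E s, sorted adj s & uniq (used s)].

Lemma mem_used_rev s d : (rev d \in used s) = (d \in used s).
Proof.
have rev_inj := can_inj revK.
have mem_map_rev : (d \in map rev s) = (rev d \in s) by rewrite -{1}(revK d) mem_map.
by rewrite !mem_cat mem_map_rev mem_map // orbC.
Qed.

Lemma used_E s : all E s -> {in used s, forall d, E d}.
Proof.
move=> /allP sE d; rewrite mem_cat => /orP[/sE //|/mapP[e /sE Ee ->]].
exact: E_rev.
Qed.

Lemma card_used_source s v : uniq (used s) ->
  #|[set d | d \in used s & source d == v]| =
  count (fun d => source d == v) s + count (fun d => target d == v) s.
Proof.
move=> uniq_s.
have -> : count (fun d => target d == v) s = count (fun d => source d == v) (map rev s).
  by rewrite count_map.
rewrite -count_cat -size_filter.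
rewrite -(card_uniqP (filter_uniq _ uniq_s)) -cardsE.
by apply: eq_card => d; rewrite !inE mem_filter andbC.
Qed.

Lemma count_source_path w x p : path adj x p ->
  count (fun d => source d == w) (x :: p) + (target (last x p) == w) =
  (source x == w) + count (fun d => target d == w) (x :: p).
Proof.
elim: p x => [|y p IHp] x /=; first by rewrite !addn0 addnC.
by move=> /andP[/eqP adj_xy /IHp /=]; rewrite adj_xy; lia.
Qed.

Lemma odd_card_used_open_end x p (w := target (last x p)) :
  path adj x p -> uniq (used (x :: p)) -> source x != w ->
  odd #|[set d | d \in used (x :: p) & source d == w]|.
Proof.
move=> xp uniq_xp; rewrite (card_used_source _ uniq_xp).
by have := count_source_path w xp; rewrite eqxx => /= + /negbTE ->; lia.
Qed.

Lemma exists_unused_source s v : all E s ->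
  odd #|[set d | d \in used s & source d == v]| ->
  exists2 d, E d && (d \notin used s) & source d == v.
Proof.
move=> sE odd_used.
have [d /andP[/andP[Ed unused_d] source_dv]|none] :=
  pickP [pred d | E d && (d \notin used s) && (source d == v)].
  by exists d; rewrite ?Ed.
suff used_eq : [set d | d \in used s & source d == v] = [set d | E d & source d == v].
  by move: (even_degree v); rewrite -used_eq odd_used.
apply/setP => d; rewrite !inE; have := none d; rewrite /= -andbA.
case used_d: (d \in used s) => /=; first by rewrite (used_E sE used_d).
by move=> ->.
Qed.

Lemma trail_rcons s d : trail s -> E d -> d \notin used s ->
  sorted adj (rcons s d) -> trail (rcons s d).
Proof.
move=> /and3P[sE _ uniq_s] Ed unused_d adj_sd; rewrite /trail all_rcons Ed sE adj_sd /=.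
have perm_used : perm_eq (used (rcons s d)) (d :: rev d :: used s).
  by apply/permP => P; rewrite /used map_rcons -!cats1 /= !count_cat /=; lia.
rewrite (perm_uniq perm_used) /= inE negb_or eq_sym rev_neq // unused_d.
by rewrite mem_used_rev unused_d.
Qed.

Lemma target_used_cycle s d : cycle adj s -> d \in used s -> target d \in map source s.
Proof.
move=> cyc_s; rewrite mem_cat => /orP[ds|/mapP[e es ->]].
  by rewrite (eqP (next_cycle cyc_s ds)) map_f // mem_next.
by rewrite /target revK map_f.
Qed.

Lemma exists_unused_on_cycle s x e : cycle adj s -> x \in s ->
  E e -> e \notin used s -> connect adjE x e ->
  exists2 d, E d && (d \notin used s) & source d \in map source s.
Proof.
move=> cyc_s xs Ee unused_e /connectP[p]; have : x \in used s by rewrite mem_cat xs.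
elim: p x {xs} => [|y p IHp] x used_x /=.
  by move=> _ eq_ex; move: unused_e; rewrite eq_ex used_x.
move=> /andP[/andP[/eqP adj_xy Ey] yp] e_last.
have [used_y|unused_y] := boolP (y \in used s); first exact: IHp used_y yp e_last.
by exists y; rewrite ?Ey // -adj_xy target_used_cycle.
Qed.

Lemma extend_open_trail x p : trail (x :: p) -> target (last x p) != source x ->
  exists d, trail (rcons (x :: p) d).
Proof.
move=> tr open_end; have /and3P[xpE xp uniq_xp] := tr.
rewrite eq_sym in open_end.
have [d /andP[Ed unused_d] /eqP source_d] :=
  exists_unused_source xpE (odd_card_used_open_end xp uniq_xp open_end).
exists d; apply: trail_rcons => //.
by rewrite /= rcons_path /adj source_d eqxx andbT.
Qed.

Lemma perm_used_rot s i : perm_eq (used (rot i s)) (used s).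
Proof. by rewrite /used map_rot perm_cat ?perm_rot. Qed.

Lemma trail_rot_cycle s i : trail s -> cycle adj s -> trail (rot i s).
Proof.
move=> /and3P[sE _ uniq_s] cyc_s.
have sorted_rot : sorted adj (rot i s).
  move: cyc_s; rewrite -(rot_cycle i); case: (rot i s) => // x p.
  by rewrite (cycle_path x); apply: path_sorted.
have perm_s : perm_eq (rot i s) s by rewrite perm_rot.
by rewrite /trail (perm_all _ perm_s) sE sorted_rot (perm_uniq (perm_used_rot s i)).
Qed.

Lemma extend_closed_trail s e : trail s -> cycle adj s -> E e -> e \notin used s ->
  exists t, trail t /\ size t = (size s).+1.
Proof.
case: s => [|x p] tr cyc_s Ee unused_e.
  by exists [:: e]; split=> //; apply: (@trail_rcons [::]).
have Ex : E x by case/and3P: tr => /andP[].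
have [d /andP[Ed unused_d] /mapP[y ys source_dy]] :=
  exists_unused_on_cycle cyc_s (mem_head x p) Ee unused_e (connected Ex Ee).
have [i q rot_s] := rot_to ys.
have perm_used : perm_eq (used (y :: q)) (used (x :: p)).
  by rewrite -rot_s perm_used_rot.
exists (rcons (y :: q) d); split; last by rewrite size_rcons -rot_s size_rot.
apply: trail_rcons; rewrite ?(perm_mem perm_used) -?rot_s ?trail_rot_cycle //.
have := cyc_s; rewrite -(rot_cycle i) rot_s /= !rcons_path => /andP[-> /eqP target_last] /=.
by rewrite /adj target_last source_dy.
Qed.

Lemma extend_trail s : trail s -> (cycle adj s -> exists2 e, E e & e \notin used s) ->
  exists t, trail t /\ size t = (size s).+1.
Proof.
move=> tr; have [cyc_s /(_ isT)[e Ee unused_e]|open_s _] := boolP (cycle adj s).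
  exact: extend_closed_trail unused_e.
case: s tr open_s => [//|x p] tr; have /and3P[_ /= xp _] := tr.
rewrite /= rcons_path xp /= => open_end.
by have [d tr_d] := extend_open_trail tr open_end; exists (rcons (x :: p) d); rewrite size_rcons.
Qed.

Lemma trail_size s : trail s -> size s <= #|D|.
Proof. by case/and3P=> _ _; rewrite cat_uniq => /andP[/card_uniqP <- _]; apply: max_card. Qed.

Lemma exists_covering_closed_trail :
  exists s, [/\ trail s, cycle adj s & {in E, forall d, d \in used s}].
Proof.
suff: forall m s, #|D| - size s < m -> trail s ->
    exists s, [/\ trail s, cycle adj s & {in E, forall d, d \in used s}].
  by move=> /(_ #|D|.+1 [::]); apply=> //; rewrite subn0.
elim=> // m IHm s bound tr.
have [|not_covering] := boolP (cycle adj s && [forall d, E d ==> (d \in used s)]).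
  by case/andP=> cyc_s /forall_inP cover; exists s.
have [t [tr_t size_t]] : exists t, trail t /\ size t = (size s).+1.
  apply: (extend_trail tr) => cyc_s.
  by move: not_covering; rewrite cyc_s => /forall_inPn[e Ee unused_e]; exists e.
by apply: (IHm _ _ tr_t); have := trail_size tr_t; lia.
Qed.

Theorem euler_circuit_exists :
  exists s, [/\ all E s, cycle adj s &
                {in E, forall d, count_mem d s + count_mem (rev d) s = 1}].
Proof.
have [s [/and3P[sE _ uniq_s] cyc_s cover]] := exists_covering_closed_trail.
exists s; split=> // d Ed.
have count_rev : count_mem d (map rev s) = count_mem (rev d) s.
  rewrite count_map; apply: eq_count => x /=.
  by rewrite -{1}(revK d) (inj_eq (can_inj revK)).
by rewrite -count_rev -count_cat count_uniq_mem // cover.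
Qed.

End EulerCircuit.

Lemma leq_fibS k : k <= fib k.+1.
Proof.
elim/ltn_ind: k => -[|[|[|k]]] // IH.
have -> : fib k.+4 = fib k.+3 + fib k.+2 by [].
by have := IH k.+2 (leqnn _); have := IH k.+1 (ltnW (leqnn _)); lia.
Qed.

Definition is_fib m := [exists k : 'I_m.+2, fib k == m].

Lemma is_fibP m : reflect (in_fib m) (is_fib m).
Proof.
apply: (iffP existsP) => [[k /eqP <-]|[k <-]]; first by exists k.
have lt_k : k < (fib k).+2 by case: k => // k; have := leq_fibS k; lia.
by exists (Ordinal lt_k).
Qed.

Definition is_dartb n (d : dart n) : bool :=
  let: (A, B, i, j) := d in
  [&& A != set0, B != set0, i \in A, j \in B & (i != j) && is_fib (i.+1 + j.+1)].

Lemma is_dartP n (d : dart n) : reflect (is_dart d) (is_dartb d).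
Proof.
case: d => [[[A B] i] j]; apply: (iffP and5P) => -[nA nB iA jB].
  by case/andP=> ij /is_fibP fib_ij.
by case=> ij /is_fibP fib_ij; split=> //; rewrite ij.
Qed.

Lemma drevK n : involutive (@drev n).
Proof. by case=> [[[A B] i] j]. Qed.

Lemma is_dartb_rev n : {homo @drev n : d / is_dartb d}.
Proof.
case=> [[[A B] i] j] /and5P[nA nB iA jB /andP[ij fib_ij]].
by rewrite /= nA nB iA jB eq_sym ij addnC.
Qed.

Lemma drev_neq n : {in @is_dartb n, forall d, drev d != d}.
Proof.
case=> [[[A B] i] j] /and5P[_ _ _ _ /andP[ij _]].
by apply: contra ij => /eqP[_ _ ->].
Qed.

Definition toggle (T : finType) (B : {set T}) k := [set x | (x \in B) (+) (x == k)].

Definition toggle_head n (d : dart n) : dart n :=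
  let: (A, B, i, j) := d in (A, toggle B i, i, j).

Lemma toggle_headK n : involutive (@toggle_head n).
Proof.
case=> [[[A B] i] j]; congr (_, _, _, _).
by apply/setP => x; rewrite !inE addbK.
Qed.

Lemma even_fib_degree n (v : {set 'I_n}) :
  ~~ odd #|[set d | is_dartb d & dtail d == v]|.
Proof.
apply: (even_card_involution (@toggle_headK n)).
case=> [[[A B] i] j]; rewrite !inE /= => /andP[/and5P[nA _ iA jB /andP[ij fib_ij]] tail_v].
have jB' : j \in toggle B i by rewrite inE jB eq_sym (negbTE ij).
split.
  by rewrite nA iA jB' ij fib_ij tail_v /= !andbT; apply/set0Pn; exists j.
apply/eqP => -[/setP/(_ i)]; rewrite inE eqxx addbT.
by case: (i \in B).
Qed.

Definition widen_head n (d : dart n) : dart n :=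
  let: (A, B, i, j) := d in (A, [set: 'I_n], i, j).

Lemma is_dartb_widen n : {homo @widen_head n : d / is_dartb d}.
Proof.
case=> [[[A B] i] j] /and5P[nA _ iA _ ij_fib].
by rewrite /= nA iA inE ij_fib /= andbT; apply/set0Pn; exists j.
Qed.

Lemma fib_graph_connected n :
  {in @is_dartb n &, forall d e, connect (adjE (@dtail n) (@drev n) (@is_dartb n)) d e}.
Proof.
have step (x y : dart n) : is_dartb y -> dhead x = dtail y ->
    connect (adjE (@dtail n) (@drev n) (@is_dartb n)) x y.
  by move=> Ey dhead_xy; apply: connect1; rewrite /adjE /adj /target Ey andbT; apply/eqP.
move=> d e Ed Ee.
apply: (connect_trans (y := widen_head (drev d))).
  by apply: step; [apply/is_dartb_widen/is_dartb_rev | case: d {Ed}=> [[[]]]].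
apply: (connect_trans (y := drev (widen_head e))).
  by apply: step; [apply/is_dartb_rev/is_dartb_widen | case: d {Ed}=> [[[]]]; case: e {Ee}=> [[[]]]].
by apply: step => //; case: e {Ee}=> [[[]]].
Qed.

Theorem corollary2p8 (n : nat) : 1 <= n -> fib_set_graph_eulerian n.
Proof.
move=> _.
have [s [sE cyc_s cover]] := euler_circuit_exists (@drevK n) (@is_dartb_rev n)
  (@drev_neq n) (@even_fib_degree n) (@fib_graph_connected n).
exists s; split=> //.
  by move=> d /(allP sE)/is_dartP.
by move=> d /is_dartP/cover.
Qed.
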